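(* Let $B=(V,E,>)$ be a non-elementary $k$-simple ordered Bratteli diagram with $k\ge2$, and let $L_n$ denote its transition graph at level $n$. If $L_n$ has an edge $v_1$ whose source is the vertex $Y_i$, then there is a closed walk $(v_1,\dots,v_l)$ in $L_n$ starting with $v_1$, i.e., a directed walk whose last edge $v_l$ has range $Y_i$.
   Context: Bratteli diagram: vertex sets $V^0=\{v_0\},V^1,\dots$, edge sets $E^n$ with $s(E^n)=V^n$, $r(E^n)=V^{n+1}$; $w$ at level $m$ is connected to $v$ at level $n<m$ if a finite path goes from $v$ to $w$. $k$-simple: for each $n\ge1$ pairwise disjoint $V^n_1,\dots,V^n_k\subseteq V^n$ with (i) $s(r^{-1}(v))\subseteq V^n_i$ for $v\in V^{n+1}_i$; (ii) for all $i,n$ some $m>n$ with every vertex of $V^m_i$ connected to every vertex of $V^n_i$. $V^n_o:=V^n\setminus\bigcup_iV^n_i$. Non-elementary: for every $n$ there is $m>n$ with the number of paths between any vertex of $V^n_o$ and any vertex of $V^m_o$ equal to $0$ or $\ge2$. An order is a linear order on each $r^{-1}(v)$, extended lexicographically to finite paths with common range; $e+1$ is the successor; $E_{\max},E_{\min}$, $X_{\max},X_{\min}$ are maximal/minimal edges and infinite paths. $k$-simple ordered: (1) $(V,E)$ $k$-simple; (2) infinite paths $z_{i,\max},z_{i,\min}$ with level-$n$ vertices in $V^n_i$, and $X_{\max}=\{z_{i,\max}\}_{i}$, $X_{\min}=\{z_{i,\min}\}_i$; there is $L$ such that for $n\ge L$, $v\in V^n_o$, the maximal (resp. minimal) path from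 $v_0$ to $v$ passes at level $1$ through $V^1_i$, written $m_+(v)=i$ (resp. $m_-(v)=i$); (3) for $v\in V^n_o$: (a) every edge $e$ with $s(e)=v$ satisfies $m_-(s(e+1))=m_+(v)$ (for maximal $e$, $s(e+1)$ means the level-$n$ source of the successor of a non-maximal finite path beginning with $e$); (b) if $e\notin E_{\max}$, $r(e)=v$, $s(e)\in V^{n-1}_i$, $n\ge3$, then $m_-(s(e+1))=i$. The transition graph $L_n$ (for $n\ge\max(2,L)$) is the directed multigraph with vertices $Y_1,\dots,Y_k$ and, for each $v\in V^n_o$, one edge labelled $v$ from $Y_{m_-(v)}$ to $Y_{m_+(v)}$. *)

From Stdlib Require List.
From mathcomp Require Import all_boot.
Set Implicit Arguments. Unset Strict Implicit. Unset Printing Implicit Defensive.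

(* An ordered Bratteli diagram, presented with all levels in one type:
   vertices V with a level function, edges E with source/range, and a
   rank function encoding the linear order on each r^{-1}(v). *)
Record obd := OBD {
  V : Type; E : Type;
  lvl : V -> nat;
  src : E -> V;
  rng : E -> V;
  rank : E -> nat }.

Section Defs.
Variable B : obd.
Local Notation V := (V B). Local Notation E := (E B).
Local Notation lvl := (@lvl B). Local Notation src := (@src B).
Local Notation rng := (@rng B). Local Notation rank := (@rank B).

Definition is_obd : Prop :=
  (forall e, lvl (rng e) = (lvl (src e)).+1) /\
  (exists v0, forall v, lvl v = 0 <-> v = v0) /\
  (forall n, exists v, lvl v = n) /\
  (forall n, exists s : seq V, forall v, lvl v = n -> List.In v s) /\
  (forall n, exists s : seq E, forall e, lvl (src e) = n -> List.In e s) /\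
  (forall v, 1 <= lvl v -> exists e, rng e = v) /\
  (forall v, exists e, src e = v) /\
  (* the order on r^{-1}(v) is the linear order induced by rank *)
  (forall e f, rng e = rng f -> rank e = rank f -> e = f).

Fixpoint fpath (u w : V) (p : seq E) : Prop :=
  match p with
  | [::] => u = w
  | e :: p' => src e = u /\ fpath (rng e) w p'
  end.

Definition connected (u w : V) : Prop := exists p, fpath u w p.

Definition is_max (e : E) : Prop := forall f, rng f = rng e -> rank f <= rank e.
Definition is_min (e : E) : Prop := forall f, rng f = rng e -> rank e <= rank f.

(* lexicographic order on finite paths with common range: compare at the
   highest level where they differ *)
Definition lexlt (p q : seq E) : Prop :=
  exists a b c e f, p = a ++ e :: c /\ q = b ++ f :: c /\
    size a = size b /\ rank e < rank f.

Definition succ_path (p q : seq E) : Prop :=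
  exists u u' w, fpath u w p /\ fpath u' w q /\ lvl u' = lvl u /\
    lexlt p q /\
    ~ (exists u'' r, fpath u'' w r /\ lvl u'' = lvl u /\ lexlt p r /\ lexlt r q).

Definition inf_path (x : nat -> E) : Prop :=
  lvl (src (x 0)) = 0 /\ forall j, rng (x j) = src (x j.+1).

Variable k : nat.
(* partition data: part v = Some i  means v \in V^n_i, None means v \in V^n_o
   (meaningful for levels n >= 1) *)
Variable part : V -> option 'I_k.

Definition inVi (v : V) (i : 'I_k) : Prop := 1 <= lvl v /\ part v = Some i.
Definition inVo (v : V) : Prop := 1 <= lvl v /\ part v = None.

Definition k_simple : Prop :=
  (forall e i, 2 <= lvl (rng e) -> inVi (rng e) i -> inVi (src e) i) /\
  (forall (i : 'I_k) n, 1 <= n -> exists m, n < m /\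
     forall v w, lvl v = n -> inVi v i -> lvl w = m -> inVi w i ->
       connected v w).

(* m_+(v) = i : the maximal path from v0 to v passes at level 1 through V^1_i *)
Definition mplus (v : V) (i : 'I_k) : Prop :=
  exists u e p, lvl u = 0 /\ fpath u v (e :: p) /\
    (forall f, List.In f (e :: p) -> is_max f) /\ inVi (rng e) i.
Definition mminus (v : V) (i : 'I_k) : Prop :=
  exists u e p, lvl u = 0 /\ fpath u v (e :: p) /\
    (forall f, List.In f (e :: p) -> is_min f) /\ inVi (rng e) i.

Definition k_simple_ordered (L : nat) : Prop :=
  k_simple /\
  (exists zmax zmin : 'I_k -> nat -> E,
     (forall i, inf_path (zmax i) /\ inf_path (zmin i)) /\
     (forall i j, 1 <= j -> inVi (src (zmax i j)) i /\ inVi (src (zmin i j)) i) /\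
     (forall x, inf_path x ->
        ((forall j, is_max (x j)) <-> exists i, forall j, x j = zmax i j)) /\
     (forall x, inf_path x ->
        ((forall j, is_min (x j)) <-> exists i, forall j, x j = zmin i j))) /\
  (forall v, L <= lvl v -> inVo v ->
     (exists i, mplus v i) /\ (exists i, mminus v i)) /\
  (forall v, L <= lvl v -> inVo v ->
     forall e p w f q, fpath v w (e :: p) ->
       ~ (forall g, List.In g (e :: p) -> is_max g) ->
       succ_path (e :: p) (f :: q) ->
       exists i, mminus (src f) i /\ mplus v i) /\
  (forall v e f i, L <= lvl v -> 3 <= lvl v -> inVo v ->
     rng e = v -> ~ is_max e -> inVi (src e) i ->
     succ_path [:: e] [:: f] -> mminus (src f) i).

Definition non_elementary : Prop :=
  forall n, exists m, n < m /\
    forall v w, lvl v = n -> inVo v -> lvl w = m -> inVo w ->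
      (~ connected v w) \/
      (exists p q, fpath v w p /\ fpath v w q /\ p <> q).

(* transition graph L_n: an edge labelled v from Y_a to Y_b *)
Definition tedge (n : nat) (v : V) (a b : 'I_k) : Prop :=
  lvl v = n /\ inVo v /\ mminus v a /\ mplus v b.

(* directed walk in L_n from Y_a to Y_b, edges listed with their targets *)
Fixpoint twalk (n : nat) (a : 'I_k) (w : seq (V * 'I_k)) (b : 'I_k) : Prop :=
  match w with
  | [::] => a = b
  | (v, c) :: w' => tedge n v a c /\ twalk n c w' b
  end.

End Defs.

(* Since the diagram is non-elementary, v1 reaches some vertex z of V^m_o by
   two distinct paths p < q.  The paths from level n to z between them form a
   chain p = r_0 < r_1 < ... < r_t = q of successive paths.  For successive
   paths r < r', the prefixes below the level where they differ are maximal in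
   r and minimal in r', so conditions (3a) and (3b) give m_+(s r) = m_-(s r'),
   where s denotes the source and a source in V^n_i has both labels i.  The
   sources lying in V^n_o are edges of L_n, so the chain is a walk from m_+(v1)
   to m_-(v1), which the edge v1 closes up. *)

From Pilot Require Import Defs.
From mathcomp Require Import all_boot zify.
From Stdlib Require Import Classical.
From Stdlib Require List.
(* [fpath] below is the path predicate of Defs, not the ssreflect notation. *)
Import Defs.

Set Implicit Arguments.
Unset Strict Implicit.
Unset Printing Implicit Defensive.

Local Notation all_edges P p := (forall g, List.In g p -> P g).

Lemma in_split_cat (T : Type) (x : T) (s : seq T) :
  List.In x s -> exists s1 s2, s = s1 ++ x :: s2.
Proof. exact: List.in_split. Qed.

Lemma cat_inj (T : Type) (s1 t1 s2 t2 : seq T) :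
  size s1 = size s2 -> s1 ++ t1 = s2 ++ t2 -> s1 = s2 /\ t1 = t2.
Proof.
elim: s1 s2 => [|x s1 IH] [|y s2] //= [Hs] [-> Hc].
by have [-> ->] := IH _ Hs Hc.
Qed.

Lemma cat_split (T : Type) (s1 t1 s2 t2 : seq T) :
  s1 ++ t1 = s2 ++ t2 -> size s2 <= size s1 ->
  exists s, s1 = s2 ++ s /\ t2 = s ++ t1.
Proof.
elim: s2 s1 => [|y s2 IH] s1 /=; first by move=> <- _; exists s1.
case: s1 => [|x s1] //= [-> Hc] Hs.
by have [s [-> ->]] := IH _ Hc Hs; exists s.
Qed.

Lemma split_last_difference (T : Type) (s t : seq T) :
  size s = size t -> s <> t ->
  exists s1 t1 x y c, s = s1 ++ x :: c /\ t = t1 ++ y :: c /\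
    size s1 = size t1 /\ x <> y.
Proof.
elim/last_ind: s t => [|s x IH] t; first by case: t.
case/lastP: t => [|t y]; rewrite ?size_rcons // => -[Hst] Hne.
have [Exy|Hxy] := classic (x = y); last first.
  by exists s, t, x, y, [::]; rewrite -!cats1.
subst y.
have [|s1 [t1 [x1 [y1 [c [-> [-> [Hs1 Hxy1]]]]]]]] := IH t Hst.
  by move=> Est; apply: Hne; rewrite Est.
by exists s1, t1, x1, y1, (rcons c x); rewrite -!cats1 -!catA.
Qed.

Fixpoint all_seqs (T : Type) (S : seq T) (l : nat) : seq (seq T) :=
  if l is l'.+1 then List.flat_map (fun x => map (cons x) (all_seqs S l')) S
  else [:: [::]].

Lemma all_seqsP (T : Type) (S : seq T) (s : seq T) :
  all_edges (fun x => List.In x S) s -> List.In s (all_seqs S (size s)).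
Proof.
elim: s => [|x s IH] Hs /=; first by left.
apply/List.in_flat_map; exists x; split; first by apply: Hs; left.
by apply: List.in_map; apply: IH => y Hy; apply: Hs; right.
Qed.

Section Diagram.

Variable B : obd.
Implicit Types (u v w x y z : V B) (e f g : E B) (p q r s t : seq (E B)).

Lemma fpath_cat u w p q :
  fpath u w (p ++ q) <-> exists x, fpath u x p /\ fpath x w q.
Proof.
elim: p u => [|e p IH] u /=.
  by split=> [Hq|[x [-> Hq]]]; first exists u.
split=> [[Hs /IH [x [Hp Hq]]]|[x [[Hs Hp] Hq]]]; first by exists x.
by split; last by apply/IH; exists x.
Qed.

Lemma fpath_rcons u w p g : fpath u w (rcons p g) <-> fpath u (src g) p /\ rng g = w.
Proof.
rewrite -cats1 fpath_cat /=.
by split=> [[x [Hp [Hx Hg]]]|[Hp Hg]]; [subst x | exists (src g)].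
Qed.

Lemma fpath_src u u' w p : fpath u w p -> fpath u' w p -> u = u'.
Proof. by case: p => [|e p] /= => [-> ->|[<- _] [<- _]]. Qed.

Lemma fpath_rng u w w' p : fpath u w p -> fpath u w' p -> w = w'.
Proof. by elim: p u => [|e p IH] u /= => [<- <-|[_ Hp] [_ /(IH _ Hp)]]. Qed.

Lemma not_max_lt g : ~ is_max g -> exists g', rng g' = rng g /\ rank g < rank g'.
Proof.
move=> Hg; apply: NNPP => Hnone; apply: Hg => f Hf.
by apply: NNPP => Hlt; apply: Hnone; exists f; split=> //; lia.
Qed.

Lemma not_min_gt g : ~ is_min g -> exists g', rng g' = rng g /\ rank g' < rank g.
Proof.
move=> Hg; apply: NNPP => Hnone; apply: Hg => f Hf.
by apply: NNPP => Hlt; apply: Hnone; exists f; split=> //; lia.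
Qed.

Lemma lexlt_irr p : ~ lexlt p p.
Proof.
move=> [s [t [c [e [f [-> [Est [Hst Hef]]]]]]]].
by case: (cat_inj Hst Est) Hef => _ [->]; lia.
Qed.

Lemma lexlt_catl s t p q : size s = size t -> lexlt p q -> lexlt (s ++ p) (t ++ q).
Proof.
move=> Hst [s1 [t1 [c [e [f [-> [-> [Hs1 Hef]]]]]]]].
by exists (s ++ s1), (t ++ t1), c, e, f; rewrite !catA !size_cat Hst Hs1.
Qed.

Lemma lexlt_catr p q s : lexlt p q -> lexlt (p ++ s) (q ++ s).
Proof.
move=> [s1 [t1 [c [e [f [-> [-> [Hs1 Hef]]]]]]]].
by exists s1, t1, (c ++ s), e, f; rewrite -!catA.
Qed.

Lemma lexlt_trans p q r : lexlt p q -> lexlt q r -> lexlt p r.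
Proof.
move=> [s [t [c [e [f [-> [Eq [Hst Hef]]]]]]]].
move=> [s' [t' [c' [e' [f' [Eq' [-> [Hst' Hef']]]]]]]].
rewrite {}Eq' in Eq.
have Hsize := congr1 size Eq; rewrite !size_cat /= in Hsize.
case: (ltngtP (size c) (size c')) => Hc.
- have [|[|h d] [Et /= [Eh Ec']]] := cat_split (esym Eq); first lia.
    by move: Hc; rewrite Ec'; lia.
  subst; exists s, (t' ++ f' :: d), c, e, f; rewrite -catA; do 3!split=> //.
  by move: Hst Hst'; rewrite !size_cat /=; lia.
- have [|[|h d] [Es /= [Eh Ec]]] := cat_split Eq; first lia.
    by move: Hc; rewrite Ec; lia.
  subst; exists (s ++ e :: d), t', c', e', f'; rewrite -catA; do 3!split=> //.
  by move: Hst Hst'; rewrite !size_cat /=; lia.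
- have [|Es [Ee Ec]] := cat_inj _ Eq; first lia.
  by subst; exists s, t', c, e, f'; do 3!split=> //; lia.
Qed.

Hypothesis HB : is_obd B.

Lemma lvl_rng e : lvl (rng e) = (lvl (src e)).+1.
Proof. by case: HB. Qed.

Lemma rank_inj e f : rng e = rng f -> rank e = rank f -> e = f.
Proof. by have [_ [_ [_ [_ [_ [_ [_ H]]]]]]] := HB; apply: H. Qed.

Lemma is_max_uniq g g' : is_max g -> is_max g' -> rng g = rng g' -> g = g'.
Proof. by move=> Hg Hg' Er; apply: rank_inj => //; move: (Hg g' (esym Er)) (Hg' g Er); lia. Qed.

Lemma is_min_uniq g g' : is_min g -> is_min g' -> rng g = rng g' -> g = g'.
Proof. by move=> Hg Hg' Er; apply: rank_inj => //; move: (Hg g' (esym Er)) (Hg' g Er); lia. Qed.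

Lemma fpath_lvl u w p : fpath u w p -> lvl w = lvl u + size p.
Proof.
elim: p u => [|e p IH] u /= => [->|[<- /IH ->]]; first by rewrite addn0.
by rewrite lvl_rng addnS.
Qed.

Lemma fpath_mem_lvl u w p g : fpath u w p -> List.In g p -> lvl (src g) < lvl w.
Proof.
elim: p u => [|e p IH] u //= [Hs Hp] [<-|Hg]; last exact: IH Hp Hg.
by rewrite (fpath_lvl Hp) lvl_rng; lia.
Qed.

Lemma fpath_to_lvl n v : n <= lvl v -> exists u p, lvl u = n /\ fpath u v p.
Proof.
have [_ [_ [_ [_ [_ [Hin _]]]]]] := HB.
move=> Hn; have [d] : exists d, lvl v = n + d by exists (lvl v - n); lia.
elim: d v {Hn} => [|d IH] v Hv; first by exists v, [::]; rewrite addn0 in Hv.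
have [|e Ee] := Hin v; first lia.
have [|u [p [Hu Hp]]] := IH (src e); first by move: (lvl_rng e); rewrite Ee; lia.
by exists u, (rcons p e); split=> //; apply/fpath_rcons.
Qed.

Lemma lexlt_total u u' w p q : fpath u w p -> fpath u' w q ->
  size p = size q -> p <> q -> lexlt p q \/ lexlt q p.
Proof.
move=> Hp Hq Hpq /(split_last_difference Hpq) [s [t [e [f [c [Ep [Eq [Hst Hef]]]]]]]].
subst p q.
move: Hp Hq => /fpath_cat [x [_ /= [_ He]]] /fpath_cat [y [_ /= [_ Hf]]].
case: (ltngtP (rank e) (rank f)) => Hr.
- by left; exists s, t, c, e, f.
- by right; exists t, s, c, f, e.
- by case: Hef; apply: rank_inj => //; apply: fpath_src He Hf.
Qed.

Lemma paths_to_finite n z : exists T, forall u p, lvl u = n -> fpath u z p -> List.In p T.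
Proof.
have [_ [_ [_ [_ [HE _]]]]] := HB.
have [S HS] : exists S, forall e, lvl (src e) < lvl z -> List.In e S.
  elim: (lvl z) => [|m [S HS]]; first by exists [::].
  have [Sm HSm] := HE m.
  exists (S ++ Sm) => e He; apply/List.in_app_iff.
  by case: (ltngtP (lvl (src e)) m) He => Hm He; [left; apply: HS|lia|right; apply: HSm].
exists (all_seqs S (lvl z - n)) => u p Hu Hp.
have -> : lvl z - n = size p by rewrite (fpath_lvl Hp) Hu; lia.
by apply: all_seqsP => g Hg; apply/HS/(fpath_mem_lvl Hp).
Qed.

Lemma succ_path_between u w p q u'' r : succ_path p q ->
  fpath u w p -> fpath u'' w r -> lvl u'' = lvl u -> lexlt p r -> lexlt r q -> False.
Proof.
move=> [u0 [u0' [w0 [Hp0 [_ [_ [Hpq Hnone]]]]]]] Hp Hr Hu Hpr Hrq.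
have [Eu Ew] : u0 = u /\ w0 = w.
  have [s [t [c [e [f [Ep _]]]]]] := Hpq.
  case: p Ep Hp0 Hp {Hpq Hpr Hrq Hnone} => [|g p]; first by case: s.
  by move=> _ /= [<- Hp0] [<- Hp]; split=> //; apply: fpath_rng Hp0 Hp.
by subst; apply: Hnone; exists u'', r.
Qed.

Lemma succ_path_dropl s t p q :
  succ_path (s ++ p) (t ++ q) -> size s = size t -> lexlt p q -> succ_path p q.
Proof.
move=> Hsucc Hst Hpq.
have [u [u' [w [/fpath_cat [x [Hs Hp]] [/fpath_cat [x' [Ht Hq]] [Hu _]]]]]] := Hsucc.
exists x, x', w; do 2!split=> //; split; last split=> //.
  by rewrite (fpath_lvl Hs) (fpath_lvl Ht) Hu Hst.
move=> [u'' [r [Hr [Hu'' [Hpr Hrq]]]]].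
have [|u1 [d [Hu1 Hd]]] := @fpath_to_lvl (lvl u) u''; first by rewrite Hu'' (fpath_lvl Hs); lia.
have Hds : size d = size s.
  by move: (fpath_lvl Hd) (fpath_lvl Hs); rewrite Hu1 Hu''; lia.
apply: (succ_path_between (u := u) (w := w) (u'' := u1) (r := d ++ r) Hsucc).
- by apply/fpath_cat; exists x.
- by apply/fpath_cat; exists u''.
- done.
- exact: lexlt_catl.
- by apply: lexlt_catl; rewrite ?Hds.
Qed.

Lemma succ_path_dropr p q s :
  succ_path (p ++ s) (q ++ s) -> lexlt p q -> succ_path p q.
Proof.
move=> Hsucc Hpq.
have [u [u' [w [/fpath_cat [y [Hp Hs]] [/fpath_cat [y' [Hq Hs']] [Hu _]]]]]] := Hsucc.
have Ey := fpath_src Hs' Hs; subst y'.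
exists u, u', y; do 3!split=> //; split=> //.
move=> [u'' [r [Hr [Hu'' [Hpr Hrq]]]]].
apply: (succ_path_between (u := u) (w := w) (u'' := u'') (r := r ++ s) Hsucc).
- by apply/fpath_cat; exists y.
- by apply/fpath_cat; exists y.
- done.
- exact: lexlt_catr.
- exact: lexlt_catr.
Qed.

Lemma succ_path_prefix_max s t p q : succ_path (s ++ p) (t ++ q) ->
  size s = size t -> lexlt p q -> all_edges (@is_max B) s.
Proof.
move=> Hsucc Hst Hpq g Hg; have [s1 [s2 Es]] := in_split_cat Hg; subst s.
apply: NNPP => /not_max_lt [g' [Eg' Hgg']].
have [u [_ [w [Hp _]]]] := Hsucc.
move: (Hp); rewrite -catA => /fpath_cat [x [Hs1 /= [Hx Hp']]].
have [|u1 [d [Hu1 Hd]]] := @fpath_to_lvl (lvl u) (src g').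
  by move: (lvl_rng g) (lvl_rng g'); rewrite Eg' Hx (fpath_lvl Hs1); lia.
have Hds : size d = size s1.
  by move: (lvl_rng g) (lvl_rng g') (fpath_lvl Hd) (fpath_lvl Hs1); rewrite Eg' Hx; lia.
apply: (succ_path_between (u := u) (w := w) (u'' := u1) (r := d ++ g' :: s2 ++ p) Hsucc).
- exact: Hp.
- by apply/fpath_cat; exists (src g'); rewrite /= Eg'.
- done.
- by exists s1, d, (s2 ++ p), g, g'; rewrite -catA.
- rewrite -cat_cons catA; apply: lexlt_catl => //.
  by move: Hst; rewrite !size_cat /= Hds.
Qed.

Lemma succ_path_prefix_min s t p q : succ_path (s ++ p) (t ++ q) ->
  size s = size t -> lexlt p q -> all_edges (@is_min B) t.
Proof.
move=> Hsucc Hst Hpq g Hg; have [t1 [t2 Et]] := in_split_cat Hg; subst t.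
apply: NNPP => /not_min_gt [g' [Eg' Hgg']].
have [u [u' [w [Hp [Hq [Hu _]]]]]] := Hsucc.
move: Hq; rewrite -catA /= => /fpath_cat [x [Ht1 /= [Hx Hq]]].
have [|u1 [d [Hu1 Hd]]] := @fpath_to_lvl (lvl u) (src g').
  by move: (lvl_rng g) (lvl_rng g'); rewrite Eg' Hx (fpath_lvl Ht1) Hu; lia.
have Hdt : size d = size t1.
  by move: (lvl_rng g) (lvl_rng g') (fpath_lvl Hd) (fpath_lvl Ht1); rewrite Eg' Hx Hu; lia.
apply: (succ_path_between (u := u) (w := w) (u'' := u1) (r := d ++ g' :: t2 ++ q) Hsucc).
- exact: Hp.
- by apply/fpath_cat; exists (src g'); rewrite /= Eg'.
- done.
- rewrite -cat_cons catA; apply: lexlt_catl => //.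
  by move: Hst; rewrite !size_cat /= Hdt.
- by exists d, t1, (t2 ++ q), g', g; rewrite -catA.
Qed.

Section Partition.

Variables (k : nat) (part : V B -> option 'I_k).

Lemma inVi_inj v i j : inVi part v i -> inVi part v j -> i = j.
Proof. by move=> [_ Hi] [_ Hj]; congruence. Qed.

Lemma inVi_inVo v i : inVi part v i -> ~ inVo part v.
Proof. by move=> [_ Hi] [_ Ho]; congruence. Qed.

Lemma inVo_or_inVi v : 1 <= lvl v -> inVo part v \/ exists i, inVi part v i.
Proof. by case Ev: (part v) => [i|] Hv; [right; exists i|left]. Qed.

Lemma twalk_cat n a b c ws ws' :
  twalk part n a ws b -> twalk part n b ws' c -> twalk part n a (ws ++ ws') c.
Proof.
elim: ws a => [|[v d] ws IH] a /= => [->|[He Hw] Hw'] //.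
by split=> //; apply: IH Hw Hw'.
Qed.

Hypothesis HK : k_simple part.

Lemma inVi_src e j : 1 <= lvl (src e) -> inVi part (rng e) j -> inVi part (src e) j.
Proof. by have [Hback _] := HK; move=> He; apply: Hback; rewrite lvl_rng. Qed.

Lemma inVi_fpath x y p j : fpath x y p -> 1 <= lvl x -> inVi part y j -> inVi part x j.
Proof.
elim: p x => [|e p IH] x /= => [->|[<- Hp] He Hy] //.
by apply: inVi_src He _; apply: IH Hp _ Hy; rewrite lvl_rng.
Qed.

Lemma inVo_rng e : inVo part (src e) -> inVo part (rng e).
Proof.
move=> He; have [|//|[i Hi]] := @inVo_or_inVi (rng e); first by rewrite lvl_rng.
by case: (inVi_inVo (inVi_src (proj1 He) Hi) He).
Qed.

Lemma inVo_fpath d v : inVo part v ->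
  exists z p, fpath v z p /\ lvl z = lvl v + d /\ inVo part z.
Proof.
have [_ [_ [_ [_ [_ [_ [Hout _]]]]]]] := HB.
elim: d v => [|d IH] v Hv; first by exists v, [::]; rewrite addn0.
have [e Ee] := Hout v; rewrite -Ee in Hv.
have [z [p [Hp [Hz Hzo]]]] := IH _ (inVo_rng Hv).
by exists z, (e :: p); rewrite Hz lvl_rng Ee addnS.
Qed.

(* [mplus part] and [mminus part] are [mlabel is_max] and [mlabel is_min]. *)
Definition mlabel (P : E B -> Prop) v i :=
  exists u e p, lvl u = 0 /\ fpath u v (e :: p) /\ all_edges P (e :: p) /\
    inVi part (rng e) i.

(* m_+ and m_- extended to the vertices of V^n_i, where both are i. *)
Definition label (P : E B -> Prop) v i := (inVo part v /\ mlabel P v i) \/ inVi part v i.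

Lemma label_inVi P v a j : inVi part v j -> label P v a -> a = j.
Proof. by move=> Hj [[/(inVi_inVo Hj)]|/(inVi_inj Hj)]. Qed.

Section Extremal.

Variable P : E B -> Prop.
Hypothesis P_uniq : forall g g', P g -> P g' -> rng g = rng g' -> g = g'.

Lemma extremal_path_suffix u u' v p p' : fpath u v p -> fpath u' v p' ->
  all_edges P p -> all_edges P p' -> size p <= size p' -> exists s, p' = s ++ p.
Proof.
elim/last_ind: p v p' => [|p g IH] v p'; first by exists p'; rewrite cats0.
case/lastP: p' => [|p' g']; first by rewrite size_rcons.
move=> /fpath_rcons [Hp Hg] /fpath_rcons [Hp' Hg'] HPp HPp'.
have HPg : P g by apply: HPp; rewrite -cats1; apply/List.in_app_iff; right; left.
have HPg' : P g' by apply: HPp'; rewrite -cats1; apply/List.in_app_iff; right; left.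
have Eg : g' = g by apply: P_uniq; rewrite ?Hg ?Hg'.
subst g'; rewrite !size_rcons ltnS => Hsize.
have [||s ->] := IH _ _ Hp Hp' _ _ Hsize; last by exists s; rewrite rcons_cat.
- by move=> h Hh; apply: HPp; rewrite -cats1; apply/List.in_app_iff; left.
- by move=> h Hh; apply: HPp'; rewrite -cats1; apply/List.in_app_iff; left.
Qed.

Lemma extremal_path_uniq u u' v p p' : lvl u = lvl u' ->
  fpath u v p -> fpath u' v p' -> all_edges P p -> all_edges P p' -> p = p'.
Proof.
move=> Hu Hp Hp' HPp HPp'.
have Hsize : size p = size p' by move: (fpath_lvl Hp) (fpath_lvl Hp'); rewrite Hu; lia.
have [|[|h s] Ep'] := extremal_path_suffix Hp Hp' HPp HPp'; rewrite ?Hsize //.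
by move: Hsize; rewrite Ep' size_cat /=; lia.
Qed.

Lemma label_first_edge y u e p a : label P y a -> lvl u = 0 ->
  fpath u y (e :: p) -> all_edges P (e :: p) -> inVi part (rng e) a.
Proof.
move=> [[_ [u1 [e1 [p1 [Hu1 [Hp1 [HPp1 Ha]]]]]]]|Hy] Hu Hp HPp.
  by have [->] := extremal_path_uniq (etrans Hu (esym Hu1)) Hp Hp1 HPp HPp1.
move: Hp => /= [Hs Hp]; apply: inVi_fpath Hp _ Hy.
by rewrite lvl_rng Hs Hu.
Qed.

Lemma label_extremal_path u x p a i : 1 <= lvl u ->
  fpath u x p -> all_edges P p -> mlabel P x i -> label P u a -> a = i.
Proof.
move=> Hu Hp HPp [u0 [e0 [p0 [Hu0 [Hp0 [HPp0 Hi]]]]]] Ha.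
have [|[|e s] Ep0] := extremal_path_suffix Hp Hp0 HPp HPp0.
  by move: (fpath_lvl Hp) (fpath_lvl Hp0); rewrite Hu0 /=; lia.
  by rewrite Ep0 /= in Hp0; move: (fpath_lvl Hp) (fpath_lvl Hp0); rewrite Hu0; lia.
case: Ep0 => Ee Ep; subst e0 p0.
move: Hp0; rewrite -cat_cons => /fpath_cat [x' [Hs Hp']].
have Ex' := fpath_src Hp' Hp; subst x'.
apply: inVi_inj (label_first_edge Ha Hu0 Hs _) Hi.
by move=> g Hg; apply/HPp0/(List.in_or_app (e :: s)); left.
Qed.

End Extremal.

Section Ordered.

Variable L : nat.
Hypothesis HKO : k_simple_ordered part L.

Lemma succ_path_label u u' z p q a c : 2 <= lvl u -> L <= lvl u ->
  fpath u z p -> fpath u' z q -> succ_path p q ->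
  label (@is_max B) u a -> label (@is_min B) u' c -> a = c.
Proof.
move=> Hu2 HuL Hp Hq Hsucc Ha Hc.
have [_ [_ [_ [H3a H3b]]]] := HKO.
have [s [t [C [e [f [Ep [Eq [Hst Hef]]]]]]]] : lexlt p q.
  by case: Hsucc => [? [? [? [_ [_ [_ []]]]]]].
subst p q.
have HeCf : lexlt (e :: C) (f :: C) by exists [::], [::], C, e, f.
have Hmax := succ_path_prefix_max Hsucc Hst HeCf.
have Hmin := succ_path_prefix_min Hsucc Hst HeCf.
have HsuccC := succ_path_dropl Hsucc Hst HeCf.
move: Hp Hq => /fpath_cat [x [Hs /= [Hx HC]]] /fpath_cat [x' [Ht /= [Hx' HC']]].
subst x x'.
have Efe : rng f = rng e := fpath_src HC' HC.
have Hlvl_e : lvl (src e) = lvl u + size s := fpath_lvl Hs.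
have Hu' : 1 <= lvl u'.
  by move: (lvl_rng e) (lvl_rng f) (fpath_lvl Ht); rewrite Efe; lia.
have Hnmax : ~ is_max e by move/(_ f Efe); lia.
case: (@inVo_or_inVi (src e)) => [|Hxo|[j Hj]]; first lia.
- have [|||i [Hi_min Hi_max]] := H3a _ _ Hxo e C z f C _ _ HsuccC.
  + lia.
  + by split.
  + by move/(_ e (or_introl erefl)).
  rewrite (label_extremal_path is_max_uniq _ Hs Hmax Hi_max Ha) //; last lia.
  by rewrite (label_extremal_path is_min_uniq _ Ht Hmin Hi_min Hc).
- rewrite (label_inVi (inVi_fpath Hs _ Hj) Ha); last lia.
  have Hlvl_f : 1 <= lvl (src f) by move: (lvl_rng e) (lvl_rng f); rewrite Efe; lia.
  case: (@inVo_or_inVi (rng e)) => [|Hyo|[j' Hj']]; first by rewrite lvl_rng.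
  + have Hef1 : lexlt [:: e] [:: f] by exists [::], [::], [::], e, f.
    have Hf : mminus part (src f) j.
      have Hsucc1 := @succ_path_dropr [:: e] [:: f] C HsuccC Hef1.
      by apply: (H3b _ e f j _ _ Hyo erefl Hnmax Hj Hsucc1); rewrite lvl_rng; lia.
    by rewrite (label_extremal_path is_min_uniq _ Ht Hmin Hf Hc).
  + have Ej' : j' = j by apply: inVi_inj (inVi_src _ Hj') Hj; lia.
    subst j'; rewrite -Efe in Hj'.
    by rewrite (label_inVi (inVi_fpath Ht Hu' (inVi_src Hlvl_f Hj')) Hc).
Qed.

Lemma label_walk_between n z T p q u u' a c : 2 <= n -> L <= n ->
  lvl u = n -> lvl u' = n -> fpath u z p -> fpath u' z q -> lexlt p q ->
  (forall u'' r, lvl u'' = n -> fpath u'' z r -> lexlt p r -> lexlt r q -> List.In r T) ->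
  label (@is_max B) u a -> label (@is_min B) u' c -> exists ws, twalk part n a ws c.
Proof.
(* Induct on the size of a list covering the paths strictly between p and q:
   splitting at such a path r drops r from the cover. *)
move=> Hn2 HnL; have [N] := ubnP (size T).
elim: N => // N IH in T p q u u' a c * => HTN Hu Hu' Hp Hq Hpq HT Ha Hc.
have [[u1 [r [Hu1 [Hr [Hpr Hrq]]]]]|Hnone] :=
  classic (exists u1 r, lvl u1 = n /\ fpath u1 z r /\ lexlt p r /\ lexlt r q); last first.
  exists [::]; apply: (succ_path_label _ _ Hp Hq _ Ha Hc); rewrite ?Hu //.
  exists u, u', z; do 2!split=> //; split; first by rewrite Hu Hu'.
  split=> //.
  by move=> [u1 [r [Hr [Hu1 Hprq]]]]; apply: Hnone; exists u1, r; rewrite Hu1 Hu.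
have [T1 [T2 ET]] := in_split_cat (HT _ _ Hu1 Hr Hpr Hrq); subst T.
have HN : size (T1 ++ T2) < N by move: HTN; rewrite !size_cat /=; lia.
have HT12 u'' r' : lvl u'' = n -> fpath u'' z r' -> lexlt p r' -> lexlt r' q -> r' <> r ->
    List.In r' (T1 ++ T2).
  move=> Hu'' Hr' Hpr' Hr'q Hne; apply/List.in_app_iff.
  by case/List.in_app_iff: (HT _ _ Hu'' Hr' Hpr' Hr'q) => [|[Er|]]; [left|case: Hne|right].
have Hleft c1 : label (@is_min B) u1 c1 -> exists ws, twalk part n a ws c1.
  move=> Hc1; apply: (IH (T1 ++ T2) p r u u1) => // u'' r' Hu'' Hr' Hpr' Hr'r.
  apply: HT12 Hu'' Hr' Hpr' (lexlt_trans Hr'r Hrq) _ => Er.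
  by rewrite Er in Hr'r; apply: lexlt_irr Hr'r.
have Hright c2 : label (@is_max B) u1 c2 -> exists ws, twalk part n c2 ws c.
  move=> Hc2; apply: (IH (T1 ++ T2) r q u1 u') => // u'' r' Hu'' Hr' Hrr' Hr'q.
  apply: HT12 Hu'' Hr' (lexlt_trans Hpr Hrr') Hr'q _ => Er.
  by rewrite Er in Hrr'; apply: lexlt_irr Hrr'.
case: (@inVo_or_inVi u1) => [|Hu1o|[j Hj]]; first lia.
- have [_ [_ [Hlabels _]]] := HKO.
  have [|[c2 Hc2] [c1 Hc1]] := Hlabels u1 _ Hu1o; first by rewrite Hu1.
  have [ws1 Hws1] := Hleft c1 (or_introl (conj Hu1o Hc1)).
  have [ws2 Hws2] := Hright c2 (or_introl (conj Hu1o Hc2)).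
  by exists (ws1 ++ (u1, c2) :: ws2); apply: twalk_cat Hws1 _.
- have [ws1 Hws1] := Hleft j (or_intror Hj).
  have [ws2 Hws2] := Hright j (or_intror Hj).
  by exists (ws1 ++ ws2); apply: twalk_cat Hws1 Hws2.
Qed.

Lemma label_walk_of_distinct_paths n u z p q a c : 2 <= n -> L <= n -> lvl u = n ->
  fpath u z p -> fpath u z q -> p <> q ->
  label (@is_max B) u a -> label (@is_min B) u c -> exists ws, twalk part n a ws c.
Proof.
move=> Hn2 HnL Hu Hp Hq Hpq Ha Hc.
have [T HT] := paths_to_finite n z.
have HT' p' q' u'' r : lvl u'' = n -> fpath u'' z r -> lexlt p' r -> lexlt r q' -> List.In r T.
  by move=> Hu'' Hr _ _; apply: HT Hu'' Hr.
have Hsize : size p = size q by move: (fpath_lvl Hp) (fpath_lvl Hq); lia.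
have [Hlt|Hlt] := lexlt_total Hp Hq Hsize Hpq.
- exact: (label_walk_between Hn2 HnL Hu Hu Hp Hq Hlt (HT' p q) Ha Hc).
- exact: (label_walk_between Hn2 HnL Hu Hu Hq Hp Hlt (HT' q p) Ha Hc).
Qed.

End Ordered.

End Partition.

End Diagram.

Theorem corollary7p4 (B : obd) (k : nat) (part : V B -> option 'I_k) (L : nat) :
  is_obd B -> 2 <= k ->
  k_simple_ordered part L -> non_elementary part ->
  forall n, maxn 2 L <= n ->
  forall (v1 : V B) (i b : 'I_k), tedge part n v1 i b ->
  exists (c : 'I_k) (w : seq (V B * 'I_k)), twalk part n i ((v1, c) :: w) i.
Proof.
move=> HB _ HKO HNE n; rewrite geq_max => /andP [Hn2 HnL] v1 i b Hv1.
have [Hv1n [Hv1o [Hmin Hmax]]] := Hv1.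
have HK : k_simple part by case: HKO.
have [m [Hnm Hm]] := HNE n.
have [z [l [Hl [Hz Hzo]]]] := inVo_fpath HB HK (m - n) Hv1o.
have [|Hdisc|[p [q [Hp [Hq Hpq]]]]] := Hm v1 z Hv1n Hv1o _ Hzo.
- by rewrite Hz Hv1n; lia.
- by case: Hdisc; exists l.
have [ws Hws] := label_walk_of_distinct_paths HB HK HKO Hn2 HnL Hv1n Hp Hq Hpq
  (or_introl (conj Hv1o Hmax)) (or_introl (conj Hv1o Hmin)).
by exists b, ws.
Qed.
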